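(* Let $G=(V,E)$ be a wireless sensor network whose nodes are points in the Euclidean plane, with a sink $v_s\in V$, operating under an interference model $\mathcal M$. Let $\mathcal Q$ be a finite set of periodic data collection queries, where the $i$-th query has source set $\mathcal S_i\subseteq V$, per-link transmission time $\chi_i>0$ per data unit, period $\mathbf p_i>0$, initial release time $\mathbf a_i$ and relative deadline $\mathbf d_i$. If $\mathcal Q$ is schedulable, then $$\ell_{G,\mathcal Q}(g_{v,h})\le c_1(\mathcal M)\quad\text{for every interference-aware region } g_{v,h}\ (v,h\in\mathbb Z),$$ and $$\sum_{i}\frac{|\mathcal S_i|\cdot\chi_i}{\mathbf p_i}\le 1 .$$
   Context: Network model: two nodes can communicate if they are within transmission range of each other; $E$ is the set of communication links. An interference model $\mathcal M$ specifies which sets of links can transmit simultaneously (interference-free). Examples: the protocol interference model, the RTS/CTS model and the physical (SINR) interference model. The interference-aware radius $\lambda(\mathcal M)$ is the maximum possible distance between two senders such that the corresponding two links interfere under $\mathcal M$; hence nodes pairwise more than $\lambda(\mathcal M)$ apart can transmit concurrently. Partition the plane by the vertical lines $x=i\lambda(\mathcal M)$ and horizontal lines $y=j\lambda(\mathcal M)$, $i,j\in\mathbb Z$; the square between $x=v\lambda(\mathcal M)$, $x=(v+1)\lambda(\mathcal M)$, $y=h\lambda(\mathcal M)$, $y=(h+1)\lambda(\mathcal M)$ is the interference-aware region $g_{v,h}$. The constant $c_1(\mathcal M)\ge 1$ is the maximum number of nodes that can transmit concurrently in any interference-aware region under $\mathcal M$. Queries: each source $v\in\mathcal S_i$ generates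 one data unit for the $i$-th query per period; the $t$-th instance of query $i$ is released at $\mathbf a_i+(t-1)\mathbf p_i$ and its data (the raw data unit from every node of $\mathcal S_i$, collected without aggregation) must be received by the sink by $\mathbf a_i+(t-1)\mathbf p_i+\mathbf d_i$. Transmitting one data unit of query $i$ over any link takes time $\chi_i$. The set $\mathcal Q$ is schedulable if there exist routing and an interference-free schedule of node transmissions (when each node transmits and which packets) under $\mathcal M$ such that every instance of every query meets its deadline. Initial load: for $u\in V$, $\ell_{G,\mathcal Q}(u)=\sum_{j:\,u\in\mathcal S_j}\chi_j/\mathbf p_j$; for a region $g$, $\ell_{G,\mathcal Q}(g)=\sum_{u\in V(g)}\ell_{G,\mathcal Q}(u)$, where $V(g)$ is the set of nodes of $V$ lying in $g$. *)

From HB Require Import structures.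
From mathcomp Require Import all_boot all_order all_algebra.
From mathcomp Require Import reals.
Set Implicit Arguments. Unset Strict Implicit. Unset Printing Implicit Defensive.
Import Order.TTheory GRing.Theory Num.Theory.
Local Open Scope ring_scope.

Section WSN.
Variable R : realType.

Definition pt := (R * R)%type.
Definition dist2 (a b : pt) : R := (a.1 - b.1) ^+ 2 + (a.2 - b.2) ^+ 2.

(* A geometric link: (position of sender, position of receiver). *)
Definition glink := (pt * pt)%type.

(* An interference model: which (finite) lists of links can transmit
   simultaneously, interference-free.  It depends only on geometry. *)
Definition interference_model := seq glink -> Prop.

Definition interferes (M : interference_model) (e1 e2 : glink) : Prop :=
  M [:: e1] /\ M [:: e2] /\ ~ M [:: e1; e2].

Definition is_interference_radius (M : interference_model) (lam : R) : Prop :=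
  0 < lam /\
  (forall e1 e2, interferes M e1 e2 -> dist2 e1.1 e2.1 <= lam ^+ 2) /\
  (exists e1 e2, interferes M e1 e2 /\ dist2 e1.1 e2.1 = lam ^+ 2).

(* interference-aware region g_{v,h} (half-open squares, a partition) *)
Definition in_region (lam : R) (v h : int) (x : pt) : bool :=
  (v%:~R * lam <= x.1 < (v + 1)%:~R * lam) &&
  (h%:~R * lam <= x.2 < (h + 1)%:~R * lam).

Definition concurrent_in_region (M : interference_model) (lam : R) (v h : int)
    (L : seq glink) : Prop :=
  M L /\ uniq (map fst L) /\ all (in_region lam v h) (map fst L).

Definition is_c1 (M : interference_model) (lam : R) (c : nat) : Prop :=
  (forall v h L, concurrent_in_region M lam v h L -> (size L <= c)%N) /\
  (exists v h L, concurrent_in_region M lam v h L /\ size L = c).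

Definition comm_link (V : finType) (pos : V -> pt) (r : R) (u w : V) : bool :=
  (u != w) && (dist2 (pos u) (pos w) <= r ^+ 2).

Record query (V : finType) := Query {
  q_src : {set V};
  q_chi : R;
  q_p   : R;
  q_a   : R;
  q_d   : R
}.

(* Release time and absolute deadline of instance number t.+1 (t : nat). *)
Definition release (V : finType) (q : query V) (t : nat) : R := q_a q + t%:R * q_p q.
Definition deadline (V : finType) (q : query V) (t : nat) : R := release q t + q_d q.

(* A route of one data unit: the successive hops (receiver, start time).
   [valid_route E chi sink x tmin dl r]: starting at node x, the next hop may
   start at time >= tmin; each hop uses a link of E and lasts chi; the data
   unit must have arrived at the sink by dl. *)
Fixpoint valid_route (V : finType) (E : rel V) (chi : R) (sink : V) (x : V)
    (tmin dl : R) (r : seq (V * R)) : Prop :=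
  match r with
  | [::] => x = sink /\ tmin <= dl
  | (y, s) :: r' => E x y /\ tmin <= s /\ valid_route E chi sink y (s + chi) dl r'
  end.

Fixpoint route_tx (V : finType) (x : V) (r : seq (V * R)) : seq (V * V * R) :=
  match r with
  | [::] => [::]
  | (y, s) :: r' => (x, y, s) :: route_tx y r'
  end.

(* A schedule assigns a route to every data unit (query i, instance t.+1,
   source v); no aggregation: every raw data unit is routed separately. *)
Definition schedule (V : finType) (n : nat) := 'I_n -> nat -> V -> seq (V * R).

(* identifier of a transmission: (query, instance, source, hop index) *)
Definition tx_id (V : finType) (n : nat) := ('I_n * nat * V * nat)%type.

Definition tx_of (V : finType) (n : nat) (sc : schedule V n) (id : tx_id V n) : V * V * R :=
  let: (i, t, v, k) := id in nth (v, v, 0) (route_tx v (sc i t v)) k.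

Definition tx_exists (V : finType) (n : nat) (Q : 'I_n -> query V) (sc : schedule V n)
    (id : tx_id V n) : bool :=
  let: (i, t, v, k) := id in (v \in q_src (Q i)) && (k < size (sc i t v))%N.

Definition tx_active (V : finType) (n : nat) (Q : 'I_n -> query V) (sc : schedule V n)
    (tau : R) (id : tx_id V n) : bool :=
  tx_exists Q sc id &&
  let: (i, _, _, _) := id in
  let: (_, _, s) := tx_of sc id in (s <= tau) && (tau < s + q_chi (Q i)).

Definition interference_free (V : finType) (n : nat) (pos : V -> pt) (M : interference_model)
    (Q : 'I_n -> query V) (sc : schedule V n) : Prop :=
  forall (tau : R) (L : seq (tx_id V n)),
    uniq L -> all (tx_active Q sc tau) L ->
    let T := map (tx_of sc) L in
    uniq (map (fun x => x.1.1) T) /\ uniq (map (fun x => x.1.2) T) /\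
    M (map (fun x => (pos x.1.1, pos x.1.2)) T).

Definition schedulable (V : finType) (n : nat) (pos : V -> pt) (E : rel V) (sink : V)
    (M : interference_model) (Q : 'I_n -> query V) : Prop :=
  exists sc : schedule V n,
    (forall i t v, v \in q_src (Q i) ->
       valid_route E (q_chi (Q i)) sink v (release (Q i) t)
                   (deadline (Q i) t) (sc i t v)) /\
    interference_free pos M Q sc.

Definition node_load (V : finType) (n : nat) (Q : 'I_n -> query V) (u : V) : R :=
  \sum_(j < n | u \in q_src (Q j)) q_chi (Q j) / q_p (Q j).

Definition region_load (V : finType) (n : nat) (pos : V -> pt) (Q : 'I_n -> query V)
    (lam : R) (v h : int) : R :=
  \sum_(u : V | in_region lam v h (pos u)) node_load Q u.

End WSN.

(* Every data unit of query i leaves its source by a first hop and reaches the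
   sink by a last hop, each of length chi_i and lying inside the window of its
   instance.  Over a horizon [0, T] query i releases about T / p_i instances, so
   the first hops of the sources of a region g occupy a total time of about
   T * l(g), while at any instant at most c_1 of them are active: their senders
   are distinct nodes of g transmitting concurrently.  Comparing the two as
   T -> oo gives l(g) <= c_1.  The last hops all have the sink as receiver, so
   at most one is active at a time, and the same comparison gives
   sum_i |S_i| chi_i / p_i <= 1.  The comparison rests on an interval-packing
   bound: intervals inside [A, B] of which at most c contain any point have total
   length at most c (B - A). *)

From mathcomp Require Import all_boot all_order all_algebra.
From mathcomp Require Import reals.
From mathcomp Require Import lra.
Import Order.TTheory GRing.Theory Num.Theory.
Local Open Scope ring_scope.

Section IntervalPacking.
Variables (R : realFieldType) (I : finType) (P : pred I) (c : nat).

Lemma sumr_indicator (Q : pred I) :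
  \sum_(i | P i) ((Q i)%:R : R) = #|[pred i | P i && Q i]|%:R.
Proof.
rewrite (eq_bigr (fun i => if Q i then 1 else 0)); last by move=> i _; case: (Q i).
by rewrite -big_mkcondr /= sumr_const.
Qed.

Lemma sum_empty_intervals (s e : I -> R) :
  (forall i, P i -> s i <= e i) -> [pred i | P i && (s i < e i)] =1 xpred0 ->
  \sum_(i | P i) (e i - s i) = 0.
Proof.
move=> sle none; apply: big1 => i Pi; apply/eqP; rewrite subr_eq0 eq_le sle //=.
by have := none i; rewrite /= Pi andbT => /negbT; rewrite -leNgt.
Qed.

Lemma clip_right_le (s e x B : R) : s <= e -> e <= B -> (s < e -> s <= x) ->
  Num.max e x - Num.max s x <= ((s <= x < e)%R)%:R * (B - x).
Proof.
move=> se eB sx; case: (lerP e x) => [ex | xe].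
  by rewrite (max_r (le_trans se ex)) subrr andbF mul0r.
case: (lerP s x) => [sx' | xs]; first by rewrite /= mul1r; lra.
case: (ltrP s e) => [/sx | es]; last by rewrite /= mul0r; lra.
by rewrite leNgt xs.
Qed.

(* Cutting at the largest start [x] of a non-empty interval: the parts left of
   [x] have one fewer non-empty interval, the parts right of [x] all contain [x]. *)
Lemma interval_packing (k : nat) (s e : I -> R) (A B : R) :
  (#|[pred i | P i && (s i < e i)%R]| <= k)%N -> A <= B ->
  (forall i, P i -> [/\ A <= s i, s i <= e i & e i <= B]) ->
  (forall tau, #|[pred i | P i && (s i <= tau < e i)%R]| <= c)%N ->
  \sum_(i | P i) (e i - s i) <= c%:R * (B - A).
Proof.
elim: k s e B => [|k IH] s e B hk AB hin hc;
    have sle i : P i -> s i <= e i by case/hin.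
all: case: (pickP [pred i | P i && (s i < e i)]) => [i0 hi0|/(sum_empty_intervals _ _ sle) ->];
  try by apply: mulr_ge0; rewrite ?subr_ge0.
  by move: hk; rewrite leqn0 => /eqP/card0_eq/(_ i0)/negP; rewrite inE.
case: (arg_maxP s hi0) => j /= /andP[Pj sej] smax; set x := s j.
have [Ax _ eB] := hin j Pj; have xB : x <= B by rewrite /x; lra.
have split_at_x i : e i - s i =
    (Num.min (e i) x - Num.min (s i) x) + (Num.max (e i) x - Num.max (s i) x).
  by have := addr_min_max (e i) x; have := addr_min_max (s i) x; lra.
rewrite (eq_bigr _ (fun i _ => split_at_x i)) big_split /=.
have -> : c%:R * (B - A) = c%:R * (x - A) + c%:R * (B - x) by rewrite -mulrDr; lra.
apply: lerD.
  apply: IH => // [|i Pi|tau].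
  - rewrite -ltnS; apply: leq_trans hk; apply: proper_card; apply/properP; split.
      apply/subsetP => i; rewrite !inE => /andP[Pi lt]; rewrite Pi lt_neqAle sle //= andbT.
      by apply/eqP => eqse; move: lt; rewrite eqse ltxx.
    by exists j; rewrite !inE Pj ?sej //= /x minxx min_r ?ltxx // ltW.
  - have [As se _] := hin i Pi.
    by split; [rewrite le_min As | apply: le_min2 | rewrite ge_min lexx orbT].
  - apply: leq_trans (hc tau); apply: subset_leq_card; apply/subsetP => i.
    rewrite !inE => /andP[-> /andP[]]; rewrite ge_min lt_min => /orP[] st /andP[te tx] //=.
      by rewrite st te.
    by move: (lt_le_trans tx st); rewrite ltxx.
have right_le i : P i -> Num.max (e i) x - Num.max (s i) x <= ((s i <= x < e i)%R)%:R * (B - x).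
  move=> Pi; have [_ se eB'] := hin i Pi; apply: clip_right_le => // lt.
  by have := smax i; rewrite Pi lt => /(_ isT).
apply: le_trans (ler_sum _ right_le) _.
by rewrite -mulr_suml sumr_indicator ler_wpM2r ?subr_ge0 // ler_nat.
Qed.

End IntervalPacking.

Lemma le_of_forall_mulr_le (R : realFieldType) (x y k : R) :
  (forall T, 0 <= T -> T * x <= T * y + k) -> x <= y.
Proof.
move=> hT; rewrite leNgt; apply/negP => yx; have d_gt0 : 0 < x - y by rewrite subr_gt0.
have T_ge0 : 0 <= (`|k| + 1) / (x - y) by apply: divr_ge0; [rewrite addr_ge0 | exact: ltW].
have := hT _ T_ge0; rewrite -lerBlDl -mulrBr divfK ?gt_eqF //.
by have := ler_norm k; lra.
Qed.

Lemma sum_over_jobs (R : nmodType) (V : finType) (n K : nat) (N : 'I_n -> nat)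
    (S : 'I_n -> {set V}) (F : 'I_n -> R) :
  (forall i, N i <= K)%N ->
  \sum_(x : 'I_n * 'I_K * V | (x.1.2 < N x.1.1)%N && (x.2 \in S x.1.1)) F x.1.1 =
  \sum_(i < n) F i *+ (N i * #|S i|).
Proof.
move=> NK; rewrite -(pair_big_dep (fun y : 'I_n * 'I_K => (y.2 < N y.1)%N)
                                  (fun y u => u \in S y.1) (fun y _ => F y.1)) /=.
rewrite (eq_bigr (fun y => F y.1 *+ #|S y.1|)); last by move=> y _; rewrite sumr_const.
rewrite -(pair_big_dep xpredT (fun i (t : 'I_K) => (t < N i)%N) (fun i _ => F i *+ #|S i|)).
apply: eq_bigr => i _; rewrite -(big_ord_widen _ (fun _ => F i *+ #|S i|) (NK i)).
by rewrite sumr_const card_ord -mulrnA mulnC.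
Qed.

Section Utilization.
Variables (R : realType) (V : finType) (n : nat) (Q : 'I_n -> query R V).
Variables (S : 'I_n -> {set V}) (st : 'I_n -> nat -> V -> R) (c : nat).
Hypothesis chi_gt0 : forall i, 0 < q_chi (Q i).
Hypothesis p_gt0 : forall i, 0 < q_p (Q i).
Hypothesis window_in_instance : forall i t u, u \in S i ->
  release (Q i) t <= st i t u /\ st i t u + q_chi (Q i) <= deadline (Q i) t.
Hypothesis bounded_concurrency : forall (K : nat) (tau : R),
  (#|[pred x : 'I_n * 'I_K * V | (x.2 \in S x.1.1) &&
     (st x.1.1 x.1.2 x.2 <= tau < st x.1.1 x.1.2 x.2 + q_chi (Q x.1.1))%R]| <= c)%N.

Lemma window_within_horizon (T : R) i t u : u \in S i -> t%:R * q_p (Q i) <= T ->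
  - (`|q_a (Q i)| + `|q_d (Q i)|) <= st i t u /\
  st i t u + q_chi (Q i) <= T + (`|q_a (Q i)| + `|q_d (Q i)|).
Proof.
move=> uS tT; have [] := window_in_instance i t u uS; rewrite /deadline /release => rel dl.
have t_ge0 : 0 <= t%:R * q_p (Q i) by rewrite mulr_ge0 // ltW.
have := ler_norm (q_a (Q i)); have := ler_norm (- q_a (Q i)); rewrite normrN.
have := ler_norm (q_d (Q i)); have := normr_ge0 (q_d (Q i)); lra.
Qed.

(* The instances [t < T / p_i] all run inside [-D, T + D] with
   [D := \sum_i (|a_i| + |d_i|)], whence the constant [k := c * 2D]. *)
Lemma jobs_within_horizon : exists k : R, forall T, 0 <= T ->
  \sum_(i < n) (Num.truncn (T / q_p (Q i)) * #|S i|)%:R * q_chi (Q i) <= T * c%:R + k.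
Proof.
pose D := \sum_(i < n) (`|q_a (Q i)| + `|q_d (Q i)|).
have D_ge0 : 0 <= D by apply: sumr_ge0 => i _; rewrite addr_ge0.
have Di_le i : `|q_a (Q i)| + `|q_d (Q i)| <= D.
  by rewrite /D (bigD1 i) //= lerDl sumr_ge0 // => j _; rewrite addr_ge0.
exists (c%:R * (D + D)) => T T_ge0.
pose N i := Num.truncn (T / q_p (Q i)).
pose K := (\sum_(i < n) N i).+1.
have NK i : (N i <= K)%N by apply: leqW; rewrite (bigD1 i) //= leq_addr.
have Np_le i t : (t < N i)%N -> t%:R * q_p (Q i) <= T.
  move=> tN; rewrite -ler_pdivlMr //; apply: (@le_trans _ _ (N i)%:R).
    by rewrite ler_nat ltnW.
  by rewrite truncn_le divr_ge0 // ltW.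
pose P := [pred x : 'I_n * 'I_K * V | (x.1.2 < N x.1.1)%N && (x.2 \in S x.1.1)].
pose s (x : 'I_n * 'I_K * V) := st x.1.1 x.1.2 x.2.
pose e (x : 'I_n * 'I_K * V) := s x + q_chi (Q x.1.1).
have es x : e x - s x = q_chi (Q x.1.1) by rewrite /e addrC addKr.
have -> : \sum_(i < n) (N i * #|S i|)%:R * q_chi (Q i) = \sum_(x | P x) (e x - s x).
  rewrite (eq_bigr _ (fun x _ => es x)) (@sum_over_jobs _ _ _ _ N S (fun i => q_chi (Q i)) NK).
  by apply: eq_bigr => i _; rewrite mulr_natl.
apply: le_trans (@interval_packing R _ P c _ s e (- D) (T + D) (leqnn _) _ _ _) _.
- lra.
- case=> [[i t] u] /andP[/= tN uS].
  have [] := @window_within_horizon T i t u uS (Np_le i t tN); have := Di_le i; have := chi_gt0 i.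
  by rewrite /e /s /=; split; lra.
- move=> tau; apply: leq_trans (bounded_concurrency K tau); apply: subset_leq_card.
  by apply/subsetP => x; rewrite !inE => /andP[/andP[_ ->]].
- rewrite mulrDr mulrC; lra.
Qed.

Lemma utilization_le_of_concurrency :
  \sum_(i < n) #|S i|%:R * q_chi (Q i) / q_p (Q i) <= c%:R.
Proof.
have [k jobs_le] := jobs_within_horizon.
set K0 := \sum_(i < n) #|S i|%:R * q_chi (Q i).
apply: (@le_of_forall_mulr_le _ _ _ (k + K0)) => T T_ge0.
apply: (@le_trans _ _ (\sum_(i < n)
    (Num.truncn (T / q_p (Q i)) * #|S i|)%:R * q_chi (Q i) + K0)); last first.
  by have := jobs_le T T_ge0; lra.
rewrite mulr_sumr /K0 -big_split /=; apply: ler_sum => i _.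
set w := #|S i|%:R * q_chi (Q i); have w_ge0 : 0 <= w by rewrite mulr_ge0 // ltW.
rewrite natrM -mulrA -/w mulrA -[w in _ <= _ + w]mul1r -mulrDl natr1.
by rewrite mulrAC ler_wpM2r // ltW // truncnS_gt.
Qed.

End Utilization.

Section Routes.
Variables (R : realType) (V : finType) (E : rel V) (chi : R) (sink : V).
Hypothesis chi_ge0 : 0 <= chi.

Lemma valid_route_le r x tmin dl : valid_route E chi sink x tmin dl r -> tmin <= dl.
Proof.
elim: r x tmin => [|[y s] r IH] x tmin /=; first by case.
by case=> _ [tmin_s /IH]; apply: le_trans; apply: le_trans tmin_s _; rewrite lerDl.
Qed.

Lemma valid_route_tx_window r x tmin dl k d :
  valid_route E chi sink x tmin dl r -> (k < size r)%N ->
  tmin <= (nth d (route_tx x r) k).2 /\ (nth d (route_tx x r) k).2 + chi <= dl.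
Proof.
elim: r x tmin k => [|[y s] r IH] x tmin k //= [_ [tmin_s vr]].
case: k => [|k] /= lt_k; first by split=> //; apply: valid_route_le vr.
have [s_le le_dl] := IH _ _ _ vr lt_k; split=> //.
by apply: le_trans tmin_s _; apply: le_trans s_le; rewrite lerDl.
Qed.

Lemma valid_route_last_receiver r x tmin dl d :
  valid_route E chi sink x tmin dl r -> (0 < size r)%N ->
  (nth d (route_tx x r) (size r).-1).1.2 = sink.
Proof.
elim: r x tmin => [|[y s] [|[y' s'] r] IH] x tmin //= [_ [_ vr]] _; first by case: vr.
exact: IH vr _.
Qed.

Lemma valid_route_size_gt0 r x tmin dl :
  valid_route E chi sink x tmin dl r -> x != sink -> (0 < size r)%N.
Proof. by case: r => [[->]|//]; rewrite eqxx. Qed.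

End Routes.

Lemma route_tx_first_sender (R : realType) (V : finType) (x : V) (r : seq (V * R)) d :
  (0 < size r)%N -> (nth d (route_tx x r) 0).1.1 = x.
Proof. by case: r => [|[y s] r]. Qed.

Lemma region_load_by_query (R : realType) (V : finType) (n : nat) (pos : V -> pt R)
    (Q : 'I_n -> query R V) (lam : R) (v h : int) :
  region_load pos Q lam v h = \sum_(i < n)
    #|[set u in q_src (Q i) | in_region lam v h (pos u)]|%:R * q_chi (Q i) / q_p (Q i).
Proof.
rewrite /region_load /node_load (exchange_big_dep xpredT) //=; apply: eq_bigr => i _.
rewrite (eq_bigl (mem [set u in q_src (Q i) | in_region lam v h (pos u)])).
  by rewrite sumr_const -mulrA mulr_natl.
by move=> u; rewrite !inE andbC.
Qed.

Section Schedule.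
Variables (R : realType) (V : finType) (pos : V -> pt R) (E : rel V) (sink : V).
Variables (M : interference_model R) (n : nat) (Q : 'I_n -> query R V).
Variable sc : schedule R V n.
Hypothesis chi_gt0 : forall i, 0 < q_chi (Q i).
Hypothesis p_gt0 : forall i, 0 < q_p (Q i).
Hypothesis sink_notin_src : forall i, sink \notin q_src (Q i).
Hypothesis routes_valid : forall i t u, u \in q_src (Q i) ->
  valid_route E (q_chi (Q i)) sink u (release (Q i) t) (deadline (Q i) t) (sc i t u).
Hypothesis sc_interference_free : interference_free pos M Q sc.

Lemma route_size_gt0 i t u : u \in q_src (Q i) -> (0 < size (sc i t u))%N.
Proof.
move=> uS; apply: valid_route_size_gt0 (routes_valid i t u uS) _.
by apply: contraNneq (sink_notin_src i) => <-.
Qed.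

Definition hop_start (hop : 'I_n -> nat -> V -> nat) i t u : R :=
  (tx_of sc (i, t, u, hop i t u)).2.

Section Hop.
Variable hop : 'I_n -> nat -> V -> nat.
Hypothesis hop_lt_size : forall i t u, u \in q_src (Q i) -> (hop i t u < size (sc i t u))%N.

Lemma hop_window i t u : u \in q_src (Q i) ->
  release (Q i) t <= hop_start hop i t u /\
  hop_start hop i t u + q_chi (Q i) <= deadline (Q i) t.
Proof.
move=> uS; apply: valid_route_tx_window (routes_valid i t u uS) (hop_lt_size i t u uS).
exact: ltW.
Qed.

Lemma hop_concurrency_le (S : 'I_n -> {set V}) (c : nat) :
  (forall i, S i \subset q_src (Q i)) ->
  (forall L : seq (V * V * R),
     uniq (map (fun x => x.1.1) L) -> uniq (map (fun x => x.1.2) L) ->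
     M (map (fun x => (pos x.1.1, pos x.1.2)) L) ->
     (forall z, z \in L -> exists i t u, u \in S i /\ z = tx_of sc (i, t, u, hop i t u)) ->
     (size L <= c)%N) ->
  forall (K : nat) (tau : R),
  (#|[pred x : 'I_n * 'I_K * V | (x.2 \in S x.1.1) &&
     (hop_start hop x.1.1 x.1.2 x.2 <= tau <
      hop_start hop x.1.1 x.1.2 x.2 + q_chi (Q x.1.1))%R]| <= c)%N.
Proof.
move=> S_src size_le K tau; set A := [pred x | _].
pose id (x : 'I_n * 'I_K * V) : tx_id V n := (x.1.1, nat_of_ord x.1.2, x.2, hop x.1.1 x.1.2 x.2).
have id_inj : injective id by move=> [[i t] u] [[i' t'] u'] [-> /val_inj -> ->].
have L_uniq : uniq (map id (enum A)) by rewrite map_inj_uniq ?enum_uniq.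
have L_active : all (tx_active Q sc tau) (map id (enum A)).
  apply/allP => _ /mapP[[[i t] u] + ->]; rewrite mem_enum inE /= => /andP[uS act].
  have uQ := subsetP (S_src i) _ uS; rewrite /tx_active /= uQ hop_lt_size //=.
  by move: act; rewrite /hop_start /tx_of /=; case: nth => [[? ?] ?].
have [snd [rcv links]] := sc_interference_free tau _ L_uniq L_active.
rewrite cardE -(size_map id) -(size_map (tx_of sc)); apply: size_le => // z.
by case/mapP=> _ /mapP[[[i t] u] + ->] ->; rewrite mem_enum inE => /andP[uS _]; exists i, t, u.
Qed.

End Hop.

Lemma region_load_le (lam : R) (c1 : nat) (v h : int) :
  injective pos ->
  (forall L, concurrent_in_region M lam v h L -> (size L <= c1)%N) ->
  region_load pos Q lam v h <= c1%:R.
Proof.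
move=> pos_inj c1_max; rewrite region_load_by_query.
set S := fun i => [set u in q_src (Q i) | in_region lam v h (pos u)].
have S_src i : S i \subset q_src (Q i) by apply/subsetP => u; rewrite inE => /andP[].
have first_hop i t u : u \in q_src (Q i) -> (0 < size (sc i t u))%N by exact: route_size_gt0.
apply: (@utilization_le_of_concurrency _ _ _ _ S (hop_start (fun _ _ _ => 0%N))) => //.
  by move=> i t u /(subsetP (S_src i)); apply: hop_window.
apply: hop_concurrency_le => // L senders_uniq _ links from_S.
rewrite -(size_map (fun x => (pos x.1.1, pos x.1.2))); apply: c1_max; split=> //; split.
  by rewrite -map_comp (map_comp pos (fun x => x.1.1)) map_inj_uniq.
apply/allP => _ /mapP[_ /mapP[z zL ->] ->] /=; have [i [t [u [uS ->]]]] := from_S z zL.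
move: uS; rewrite inE => /andP[uQ u_in_g].
by rewrite /tx_of route_tx_first_sender ?first_hop.
Qed.

Lemma utilization_le1 :
  \sum_(i < n) #|q_src (Q i)|%:R * q_chi (Q i) / q_p (Q i) <= 1.
Proof.
pose last_hop i t u := (size (sc i t u)).-1.
have last_hop_lt i t u : u \in q_src (Q i) -> (last_hop i t u < size (sc i t u))%N.
  by move=> uQ; rewrite prednK ?route_size_gt0.
apply: (@utilization_le_of_concurrency _ _ _ _ (fun i => q_src (Q i))
          (hop_start last_hop) 1) => //.
  by move=> i t u; apply: hop_window.
apply: (@hop_concurrency_le last_hop last_hop_lt (fun i => q_src (Q i)) 1) => //.
move=> L _ receivers_uniq _ from_src.
have to_sink : all (pred1 sink) (map (fun x => x.1.2) L).
  apply/allP => _ /mapP[z zL ->]; have [i [t [u [uQ ->]]]] := from_src z zL.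
  apply/eqP; rewrite /tx_of /last_hop.
  exact: valid_route_last_receiver (routes_valid i t u uQ) (route_size_gt0 i t u uQ).
move: to_sink; rewrite all_count size_map => /eqP <-.
by rewrite count_uniq_mem ?leq_b1.
Qed.

End Schedule.

Arguments region_load_le {R V pos E sink M n Q sc} _ _ _ _ _ {lam c1 v h}.
Arguments utilization_le1 {R V pos E sink M n Q sc}.

Theorem theorem1 (R : realType) (V : finType) (pos : V -> pt R) (r : R)
    (sink : V) (M : interference_model R) (lam : R) (c1 : nat)
    (n : nat) (Q : 'I_n -> query R V) :
  injective pos -> 0 < r ->
  is_interference_radius M lam -> is_c1 M lam c1 ->
  (forall i, 0 < q_chi (Q i)) -> (forall i, 0 < q_p (Q i)) ->
  (forall i, sink \notin q_src (Q i)) ->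
  schedulable pos (comm_link pos r) sink M Q ->
  (forall v h : int, region_load pos Q lam v h <= c1%:R) /\
  \sum_(i < n) #|q_src (Q i)|%:R * q_chi (Q i) / q_p (Q i) <= 1.
Proof.
(* Neither the radius [lam] nor the range [r] matters; only the maximality half
   of [is_c1] is used. *)
move=> pos_inj _ _ [c1_max _] chi_gt0 p_gt0 sink_notin [sc [routes_valid sc_free]].
split=> [v h|].
  by have := region_load_le chi_gt0 p_gt0 sink_notin routes_valid sc_free pos_inj (c1_max v h).
by have := utilization_le1 chi_gt0 p_gt0 sink_notin routes_valid sc_free.
Qed.
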